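(* Let $g:L_s\to[0,1]$ be a continuous encoding of $[0,1]$ with zero redundancy, and let $x_0\in[0,1]$ be a $g$-unary point with $g$-code $(c_n)$. For $x\neq x_0$ with a $g$-code $(\alpha_n(x))$, let $m=m(x)$ be the index such that $\alpha_m(x)\neq c_m$ and $\alpha_i(x)=c_i$ for all $i<m$. Then $x\to x_0$ if and only if $m\to\infty$; that is, for any sequence $(x_k)$ of points of $[0,1]\setminus\{x_0\}$ (each with a chosen $g$-code), $x_k\to x_0$ if and only if $m(x_k)\to\infty$.
   Context: $A_s=\{0,1,\dots,s-1\}$ ($s\ge2$) and $L_s=A_s\times A_s\times\cdots$ is the space of sequences over $A_s$. An encoding of $[0,1]$ is a surjective map $g:L_s\to[0,1]$; if $g((\alpha_n))=x$, $(\alpha_n)$ is a $g$-code of $x$. The $g$-cylinder of rank $m$ with base $c_1\dots c_m$ is $\Delta^g_{c_1\dots c_m}=\{g((c_1,\dots,c_m,\alpha_1,\alpha_2,\dots)):(\alpha_n)\in L_s\}$. The encoding has zero redundancy if every point has at most two $g$-codes and the set of points with two $g$-codes is at most countable; points with exactly one code are $g$-unary. The encoding is continuous if every $g$-cylinder is an interval and any two distinct cylinders of the same rank have no common interior points. *)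

From Stdlib Require Import Reals Lra List.
Open Scope R_scope.

(* L_s: sequences over A_s = {0,...,s-1}, indexed from 0 (paper indexes from 1). *)
Definition valid_seq (s : nat) (a : nat -> nat) : Prop := forall n, (a n < s)%nat.

Definition valid_word (s : nat) (w : list nat) : Prop := Forall (fun d => (d < s)%nat) w.

Definition prepend (w : list nat) (a : nat -> nat) : nat -> nat :=
  fun n => if Nat.ltb n (length w) then nth n w 0%nat else a (n - length w)%nat.

Definition is_encoding (s : nat) (g : (nat -> nat) -> R) : Prop :=
  (forall a, valid_seq s a -> 0 <= g a <= 1) /\
  (forall x, 0 <= x <= 1 -> exists a, valid_seq s a /\ g a = x).

Definition is_code (s : nat) (g : (nat -> nat) -> R) (x : R) (a : nat -> nat) : Prop :=
  valid_seq s a /\ g a = x.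

Definition cylinder (s : nat) (g : (nat -> nat) -> R) (w : list nat) : R -> Prop :=
  fun x => exists a, valid_seq s a /\ g (prepend w a) = x.

Definition is_interval (S : R -> Prop) : Prop :=
  forall x y z, S x -> S y -> x <= z <= y -> S z.

Definition interior_point (S : R -> Prop) (x : R) : Prop :=
  exists eps, 0 < eps /\ forall y, Rabs (y - x) < eps -> S y.

Definition continuous_encoding (s : nat) (g : (nat -> nat) -> R) : Prop :=
  (forall w, valid_word s w -> is_interval (cylinder s g w)) /\
  (forall w1 w2, valid_word s w1 -> valid_word s w2 -> length w1 = length w2 ->
     w1 <> w2 -> forall x, ~ (interior_point (cylinder s g w1) x /\
                              interior_point (cylinder s g w2) x)).

Definition zero_redundancy (s : nat) (g : (nat -> nat) -> R) : Prop :=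
  (forall x, 0 <= x <= 1 -> forall a b c, is_code s g x a -> is_code s g x b ->
     is_code s g x c -> a = b \/ a = c \/ b = c) /\
  (exists f : nat -> R, forall x, 0 <= x <= 1 ->
     (exists a b, is_code s g x a /\ is_code s g x b /\ a <> b) ->
     exists k, f k = x).

Definition unary_with_code (s : nat) (g : (nat -> nat) -> R) (x : R) (c : nat -> nat) : Prop :=
  is_code s g x c /\ forall a, is_code s g x a -> a = c.

Definition first_diff (a c : nat -> nat) (m : nat) : Prop :=
  a m <> c m /\ forall i, (i < m)%nat -> a i = c i.

Definition tends_to_infinity (u : nat -> nat) : Prop :=
  forall M, exists N, forall k, (N <= k)%nat -> (M <= u k)%nat.

From Stdlib Require Import Reals.
From Stdlib Require Import Lra Lia List Classical FunctionalExtensionality ClassicalEpsilon.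
Open Scope R_scope.

(* Write D_n(b) for the cylinder whose base is the first n digits of b.  Only two
   properties of g are used: every D_n(b) is an interval, and no point has three codes.
   (i) If y lies in every D_n(b), then y = g(b): otherwise y has three codes branching
   off b at increasing positions.  So the cylinders along a code shrink to its point,
   which gives m -> oo => x -> x0.
   (ii) Cylinders are closed.  If D_n(a) contains (x0, x0 + t), choosing digits one at a
   time (Koenig's lemma, with a pigeonhole on the s digits at each step) gives a code b
   extending the base of D_n(a) all of whose cylinders contain such a right
   neighbourhood of x0; by (i) g(b) cannot lie right of x0, and g(b) <= x0 forces
   x0 in D_n(a).  Left neighbourhoods reduce to this by reflecting g about x0.
   If x -> x0 while m(x_k) < M infinitely often, one of the finitely many cylinders of
   rank <= M branching off c adheres to x0, so contains it, and x0 gets a second code. *)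

Definition adherent (S : R -> Prop) (x0 : R) : Prop :=
  forall t, 0 < t -> exists y, S y /\ Rabs (y - x0) < t.

Definition approached_from_right (S : R -> Prop) (x0 : R) : Prop :=
  forall t, 0 < t -> exists y, S y /\ x0 < y < x0 + t.

Definition contains_right_nbhd (S : R -> Prop) (x0 : R) : Prop :=
  exists t, 0 < t /\ forall z, x0 < z < x0 + t -> S z.

Lemma pigeonhole_adherence (S : nat -> R -> Prop) (Q : R -> R -> Prop)
  (HQ : forall t t' y, Q t y -> t <= t' -> Q t' y) (n : nat) :
  (forall t, 0 < t -> exists y, (exists i, (i < n)%nat /\ S i y) /\ Q t y) ->
  exists i, (i < n)%nat /\ forall t, 0 < t -> exists y, S i y /\ Q t y.
Proof.
  induction n as [|n IH]; intros H.
  - destruct (H 1 ltac:(lra)) as [y [[i [Hi _]] _]]. lia.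
  - destruct (classic (forall t, 0 < t -> exists y, S n y /\ Q t y)) as [Hn|Hn].
    + exists n. split; [lia|exact Hn].
    + apply not_all_ex_not in Hn. destruct Hn as [t0 Ht0].
      apply imply_to_and in Ht0. destruct Ht0 as [Ht0 Hno].
      destruct IH as [i [Hi Hi']].
      * intros t Ht.
        destruct (H (Rmin t t0) ltac:(apply Rmin_glb_lt; lra)) as [y [[i [Hi Si]] Qy]].
        destruct (Nat.eq_dec i n) as [->|Hin].
        -- exfalso. apply Hno. exists y. split; [exact Si|]. apply (HQ _ _ _ Qy), Rmin_r.
        -- exists y. split; [exists i; split; [lia|exact Si]|]. apply (HQ _ _ _ Qy), Rmin_l.
      * exists i. split; [lia|exact Hi'].
Qed.

Lemma interval_right_nbhd (S : R -> Prop) x0 :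
  is_interval S -> approached_from_right S x0 -> contains_right_nbhd S x0.
Proof.
  intros HI H. destruct (H 1 ltac:(lra)) as [p [Sp Hp]].
  exists (p - x0). split; [lra|]. intros z Hz.
  destruct (H (z - x0) ltac:(lra)) as [q [Sq Hq]].
  apply (HI q p z Sq Sp). lra.
Qed.

Lemma adherent_split (S : R -> Prop) x0 : adherent S x0 -> ~ S x0 ->
  approached_from_right S x0 \/ approached_from_right (fun y => S (2 * x0 - y)) x0.
Proof.
  intros H Hx0. destruct (classic (approached_from_right S x0)) as [Hr|Hr]; [left; exact Hr|right].
  apply not_all_ex_not in Hr. destruct Hr as [t1 Hr]. apply imply_to_and in Hr.
  destruct Hr as [Ht1 Hno].
  intros t Ht. destruct (H (Rmin t t1) ltac:(apply Rmin_glb_lt; lra)) as [y [Sy Hy]].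
  assert (Rmin t t1 <= t) by apply Rmin_l. assert (Rmin t t1 <= t1) by apply Rmin_r.
  assert (y <> x0) by (intros ->; contradiction).
  apply Rabs_def2 in Hy. destruct (Rlt_or_le x0 y).
  - exfalso. apply Hno. exists y. split; [exact Sy|lra].
  - exists (2 * x0 - y). replace (2 * x0 - (2 * x0 - y)) with y by ring.
    split; [exact Sy|]. destruct (Rle_lt_or_eq_dec y x0); [assumption|lra..].
Qed.

Lemma fun_neq_ex (e b : nat -> nat) : e <> b -> exists d, e d <> b d.
Proof.
  intros H. apply not_all_not_ex. intros Hall. apply H, functional_extensionality.
  intros i. apply NNPP, Hall.
Qed.

Lemma dependent_choice_nat {A : Type} (P : nat -> A -> Prop) (Rel : nat -> A -> A -> Prop)
  (a0 : A) : P 0%nat a0 -> (forall n a, P n a -> exists a', P (S n) a' /\ Rel n a a') ->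
  exists u : nat -> A, u 0%nat = a0 /\ forall n, P n (u n) /\ Rel n (u n) (u (S n)).
Proof.
  intros H0 Hstep.
  assert (step : forall n (a : {a | P n a}), {a' | P (S n) a' /\ Rel n (proj1_sig a) a'}).
  { intros n [a Ha]. apply constructive_indefinite_description. exact (Hstep n a Ha). }
  pose (u := fix u n : {a | P n a} :=
    match n return {a | P n a} with
    | O => exist _ a0 H0
    | S n => exist _ (proj1_sig (step n (u n))) (proj1 (proj2_sig (step n (u n))))
    end).
  exists (fun n => proj1_sig (u n)). split; [reflexivity|].
  intros n. split; [exact (proj2_sig (u n))|]. exact (proj2 (proj2_sig (step n (u n)))).
Qed.

Lemma coherent_diagonal (u : nat -> nat -> nat) (n0 : nat) :
  (forall r i, (i < n0 + r)%nat -> u (S r) i = u r i) ->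
  forall r i, (i < n0 + r)%nat -> u (S i) i = u r i.
Proof.
  intros Hu.
  assert (Hk : forall r k i, (i < n0 + r)%nat -> u (k + r)%nat i = u r i).
  { intros r k i Hi. induction k as [|k IH]; [reflexivity|].
    simpl. rewrite Hu by lia. exact IH. }
  intros r i Hi. rewrite <- (Hk (S i) r i) by lia.
  rewrite Nat.add_comm. apply Hk. exact Hi.
Qed.

Definition upd (b : nat -> nat) (n d : nat) : nat -> nat :=
  fun i => if Nat.eqb i n then d else b i.

Lemma upd_lt b n d i : (i < n)%nat -> upd b n d i = b i.
Proof. intros Hi. unfold upd. destruct (Nat.eqb_spec i n); [lia|reflexivity]. Qed.

Lemma upd_eq b n d : upd b n d n = d.
Proof. unfold upd. rewrite Nat.eqb_refl. reflexivity. Qed.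

Definition prefix_cylinder (s : nat) (G : (nat -> nat) -> R) (a : nat -> nat) (n : nat)
  : R -> Prop :=
  fun y => exists e, valid_seq s e /\ (forall i, (i < n)%nat -> e i = a i) /\ G e = y.

Definition at_most_two_codes (s : nat) (G : (nat -> nat) -> R) : Prop :=
  forall a b c, valid_seq s a -> valid_seq s b -> valid_seq s c ->
    G a = G b -> G a = G c -> a = b \/ a = c \/ b = c.

Section PrefixCylinders.

Variables (s : nat) (G : (nat -> nat) -> R).

Lemma prefix_cylinder_ext a a' n y : (forall i, (i < n)%nat -> a i = a' i) ->
  prefix_cylinder s G a n y -> prefix_cylinder s G a' n y.
Proof.
  intros H [e [He [Ha Hg]]]. exists e. split; [exact He|split; [|exact Hg]].
  intros i Hi. rewrite Ha by exact Hi. apply H, Hi.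
Qed.

Lemma prefix_cylinder_antimono a n n' y : (n <= n')%nat ->
  prefix_cylinder s G a n' y -> prefix_cylinder s G a n y.
Proof.
  intros Hn [e [He [Ha Hg]]]. exists e. split; [exact He|split; [|exact Hg]].
  intros i Hi. apply Ha. lia.
Qed.

Lemma prefix_cylinder_code a n : valid_seq s a -> prefix_cylinder s G a n (G a).
Proof. intros Ha. exists a. auto. Qed.

Lemma prefix_cylinder_branch e b n : valid_seq s e ->
  (forall i, (i < n)%nat -> e i = b i) -> prefix_cylinder s G (upd b n (e n)) (S n) (G e).
Proof.
  intros He Heb. exists e. split; [exact He|split; [|reflexivity]].
  intros i Hi. destruct (Nat.eq_dec i n) as [->|Hin]; [symmetry; apply upd_eq|].
  rewrite upd_lt by lia. apply Heb. lia.
Qed.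

Lemma prefix_cylinders_valid b : (forall n, exists y, prefix_cylinder s G b n y) ->
  valid_seq s b.
Proof.
  intros Hb i. destruct (Hb (S i)) as [y [e [He [Heb _]]]].
  rewrite <- Heb by lia. apply He.
Qed.

Hypothesis two_codes : at_most_two_codes s G.

Lemma nested_prefix_cylinders_code b y : (forall n, prefix_cylinder s G b n y) -> G b = y.
Proof.
  intros Hn. apply NNPP. intros Hne.
  destruct (Hn 0%nat) as [e0 [V0 [_ G0]]].
  destruct (fun_neq_ex e0 b) as [d0 D0]; [intros ->; contradiction|].
  destruct (Hn (S d0)) as [e1 [V1 [A1 G1]]].
  destruct (fun_neq_ex e1 b) as [d1 D1]; [intros ->; contradiction|].
  assert (d0 < d1)%nat.
  { destruct (Nat.lt_ge_cases d0 d1) as [l|l]; [exact l|].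
    exfalso. apply D1, A1. lia. }
  destruct (Hn (S d1)) as [e2 [V2 [A2 G2]]].
  destruct (two_codes e0 e1 e2 V0 V1 V2) as [E|[E|E]]; try congruence; subst.
  - apply D0, A1. lia.
  - apply D0, A2. lia.
  - apply D1, A2. lia.
Qed.

Hypothesis cyl_interval : forall a n, is_interval (prefix_cylinder s G a n).

Lemma prefix_cylinder_shrinks c : valid_seq s c -> forall eps, 0 < eps ->
  exists n, forall y, prefix_cylinder s G c n y -> Rabs (y - G c) < eps.
Proof.
  intros Hc eps Heps. apply NNPP. intros Hno.
  assert (Hside : forall n, prefix_cylinder s G c n (G c + eps) \/
                            prefix_cylinder s G c n (G c - eps)).
  { intros n. apply NNPP. intros Hn. apply Hno. exists n. intros y Hy.
    apply Rnot_le_lt. intros Hfar. apply Hn.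
    destruct (Rle_or_lt 0 (y - G c)).
    - rewrite Rabs_right in Hfar by lra. left.
      apply (cyl_interval c n (G c) y); [apply prefix_cylinder_code, Hc|exact Hy|lra].
    - rewrite Rabs_left in Hfar by lra. right.
      apply (cyl_interval c n y (G c)); [exact Hy|apply prefix_cylinder_code, Hc|lra]. }
  destruct (classic (forall n, prefix_cylinder s G c n (G c + eps))) as [Hp|Hp].
  - pose proof (nested_prefix_cylinders_code c _ Hp). lra.
  - apply not_all_ex_not in Hp. destruct Hp as [n1 Hn1].
    assert (Hm : forall n, prefix_cylinder s G c n (G c - eps)).
    { intros n. destruct (Hside (n + n1)%nat) as [H|H].
      - exfalso. apply Hn1. apply (prefix_cylinder_antimono c n1 (n + n1)); [lia|exact H].
      - apply (prefix_cylinder_antimono c n (n + n1)); [lia|exact H]. }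
    pose proof (nested_prefix_cylinders_code c _ Hm). lra.
Qed.

Variable x0 : R.

Lemma right_nbhd_refine b n : contains_right_nbhd (prefix_cylinder s G b n) x0 ->
  exists d, contains_right_nbhd (prefix_cylinder s G (upd b n d) (S n)) x0.
Proof.
  intros [tb [Htb Hb]].
  destruct (pigeonhole_adherence (fun d y => prefix_cylinder s G (upd b n d) (S n) y)
     (fun t y => x0 < y < x0 + t) ltac:(intros; lra) s) as [d [_ Hacc]].
  - intros t Ht. pose (y := x0 + Rmin t tb / 2).
    assert (0 < Rmin t tb) by (apply Rmin_glb_lt; lra).
    assert (Rmin t tb <= t) by apply Rmin_l. assert (Rmin t tb <= tb) by apply Rmin_r.
    destruct (Hb y ltac:(unfold y; lra)) as [e [Ve [Ae Ge]]].
    exists y. split; [|unfold y; lra].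
    exists (e n). split; [apply Ve|]. rewrite <- Ge. apply prefix_cylinder_branch; assumption.
  - exists d. apply interval_right_nbhd; [apply cyl_interval|exact Hacc].
Qed.

Lemma right_nbhd_limit_code a n : contains_right_nbhd (prefix_cylinder s G a n) x0 ->
  exists b, (forall i, (i < n)%nat -> b i = a i) /\
            forall N, contains_right_nbhd (prefix_cylinder s G b N) x0.
Proof.
  intros Ha.
  destruct (dependent_choice_nat
    (fun r b => contains_right_nbhd (prefix_cylinder s G b (n + r)) x0)
    (fun r b b' => forall i, (i < n + r)%nat -> b' i = b i) a) as [B [HB0 HB]].
  - rewrite Nat.add_0_r. exact Ha.
  - intros r b Hb. destruct (right_nbhd_refine b (n + r) Hb) as [d Hd].
    exists (upd b (n + r) d). rewrite Nat.add_succ_r. split; [exact Hd|].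
    intros i Hi. apply upd_lt, Hi.
  - pose (b := fun i => B (S i) i).
    assert (Hb : forall r i, (i < n + r)%nat -> b i = B r i)
      by (apply coherent_diagonal; intros r; apply HB).
    exists b. split.
    + intros i Hi. rewrite <- HB0. apply Hb. lia.
    + intros N. destruct (proj1 (HB N)) as [t [Ht Hin]]. exists t. split; [exact Ht|].
      intros z Hz. apply (prefix_cylinder_antimono b N (n + N)); [lia|].
      apply (prefix_cylinder_ext (B N)); [|apply Hin, Hz].
      intros i Hi. symmetry. apply Hb, Hi.
Qed.

Lemma prefix_cylinder_right_closed a n :
  contains_right_nbhd (prefix_cylinder s G a n) x0 -> prefix_cylinder s G a n x0.
Proof.
  intros Ha. destruct (right_nbhd_limit_code a n Ha) as [b [Hba Hb]].
  assert (Vb : valid_seq s b).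
  { apply prefix_cylinders_valid. intros N. destruct (Hb N) as [t [Ht Hin]].
    exists (x0 + t / 2). apply Hin. lra. }
  destruct (Rle_or_lt (G b) x0) as [Hle|Hlt].
  - apply (prefix_cylinder_ext b); [exact Hba|].
    destruct (Hb n) as [t [Ht Hin]].
    apply (cyl_interval b n (G b) (x0 + t / 2) x0);
      [apply prefix_cylinder_code, Vb|apply Hin; lra|lra].
  - exfalso. pose (y1 := (x0 + G b) / 2).
    enough (G b = y1) by (unfold y1 in *; lra).
    apply nested_prefix_cylinders_code. intros N.
    destruct (Hb N) as [t [Ht Hin]].
    pose (u := Rmin t (G b - x0)).
    assert (0 < u) by (apply Rmin_glb_lt; lra).
    assert (u <= t) by apply Rmin_l. assert (u <= G b - x0) by apply Rmin_r.
    apply (cyl_interval b N (x0 + u / 2) (G b) y1);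
      [apply Hin; lra|apply prefix_cylinder_code, Vb|unfold y1; lra].
Qed.

End PrefixCylinders.

Lemma prefix_cylinder_reflect s G x0 a n y :
  prefix_cylinder s (fun e => 2 * x0 - G e) a n y <-> prefix_cylinder s G a n (2 * x0 - y).
Proof.
  split; intros [e [Ve [Ae Ge]]]; exists e; (split; [exact Ve|split; [exact Ae|lra]]).
Qed.

Lemma prefix_cylinder_closed s G (two_codes : at_most_two_codes s G)
  (cyl_interval : forall a n, is_interval (prefix_cylinder s G a n)) x0 a n :
  adherent (prefix_cylinder s G a n) x0 -> prefix_cylinder s G a n x0.
Proof.
  intros Had. apply NNPP. intros Hout.
  destruct (adherent_split _ x0 Had Hout) as [Hr|Hl].
  - apply Hout, prefix_cylinder_right_closed; try assumption.
    apply interval_right_nbhd; [apply cyl_interval|exact Hr].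
  - pose (G' := fun e => 2 * x0 - G e).
    assert (two_codes' : at_most_two_codes s G').
    { intros e1 e2 e3 V1 V2 V3 E12 E13. unfold G' in *. apply two_codes; auto; lra. }
    assert (cyl_interval' : forall a n, is_interval (prefix_cylinder s G' a n)).
    { intros a' n' y z w Hy Hz Hw. apply prefix_cylinder_reflect.
      apply prefix_cylinder_reflect in Hy, Hz.
      apply (cyl_interval a' n' _ _ _ Hz Hy). lra. }
    apply Hout. replace x0 with (2 * x0 - x0) by ring. apply prefix_cylinder_reflect.
    apply (prefix_cylinder_right_closed s G'); try assumption.
    apply interval_right_nbhd; [apply cyl_interval'|].
    intros t Ht. destruct (Hl t Ht) as [y [Hy Hyt]].
    exists y. split; [apply prefix_cylinder_reflect, Hy|exact Hyt].
Qed.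

Lemma nth_map_seq (a : nat -> nat) n i : (i < n)%nat -> nth i (map a (seq 0 n)) 0%nat = a i.
Proof.
  intros Hi. rewrite (nth_indep _ _ (a 0%nat)) by (rewrite length_map, length_seq; exact Hi).
  rewrite map_nth, seq_nth by exact Hi. reflexivity.
Qed.

Lemma prefix_cylinder_cylinder s g a n y : (forall i, (i < n)%nat -> (a i < s)%nat) ->
  (prefix_cylinder s g a n y <-> cylinder s g (map a (seq 0 n)) y).
Proof.
  intros Ha.
  assert (Hl : length (map a (seq 0 n)) = n) by (rewrite length_map, length_seq; reflexivity).
  split.
  - intros [e [Ve [Ae Ge]]]. exists (fun i => e (i + n)%nat). split; [intros i; apply Ve|].
    rewrite <- Ge. f_equal. apply functional_extensionality. intros i. unfold prepend.
    rewrite Hl. destruct (Nat.ltb_spec i n).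
    + rewrite nth_map_seq by assumption. symmetry. apply Ae. assumption.
    + f_equal. lia.
  - intros [e [Ve Ge]]. exists (prepend (map a (seq 0 n)) e).
    split; [|split; [|exact Ge]]; unfold prepend; rewrite Hl.
    + intros i. destruct (Nat.ltb_spec i n);
        [rewrite nth_map_seq by assumption; apply Ha; assumption|apply Ve].
    + intros i Hi. destruct (Nat.ltb_spec i n); [apply nth_map_seq; assumption|lia].
Qed.

Lemma continuous_encoding_prefix_interval s g : continuous_encoding s g ->
  forall a n, is_interval (prefix_cylinder s g a n).
Proof.
  intros Hc a n. destruct (classic (forall i, (i < n)%nat -> (a i < s)%nat)) as [Ha|Ha].
  - intros x y z Hx Hy Hz. apply (prefix_cylinder_cylinder s g a n z Ha).
    apply (proj1 Hc (map a (seq 0 n))) with x y.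
    + apply Forall_forall. intros d Hd. apply in_map_iff in Hd.
      destruct Hd as [i [<- Hi]]. apply in_seq in Hi. apply Ha. lia.
    + apply (prefix_cylinder_cylinder s g a n x Ha), Hx.
    + apply (prefix_cylinder_cylinder s g a n y Ha), Hy.
    + exact Hz.
  - intros x y z [e [Ve [Ae _]]]. exfalso. apply Ha. intros i Hi.
    rewrite <- Ae by exact Hi. apply Ve.
Qed.

Lemma zero_redundancy_two_codes s g : is_encoding s g -> zero_redundancy s g ->
  at_most_two_codes s g.
Proof.
  intros Hg Hz a b c Va Vb Vc Hab Hac.
  apply (proj1 Hz (g a)); [apply (proj1 Hg), Va|split; auto..].
Qed.

Definition branches_before (s : nat) (g : (nat -> nat) -> R) (c : nat -> nat) (M : nat)
  : R -> Prop :=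
  fun y => exists e j, (j < M)%nat /\ is_code s g y e /\ first_diff e c j.

Lemma unary_not_adherent_branches s g (two_codes : at_most_two_codes s g)
  (cyl_interval : forall a n, is_interval (prefix_cylinder s g a n)) x0 c M :
  unary_with_code s g x0 c -> ~ adherent (branches_before s g c M) x0.
Proof.
  intros [_ Uc] Had.
  pose (Q := fun t y => Rabs (y - x0) < t).
  assert (HQ : forall t t' y, Q t y -> t <= t' -> Q t' y) by (unfold Q; intros; lra).
  destruct (pigeonhole_adherence (fun j y => exists d, (d < s)%nat /\ d <> c j /\
      prefix_cylinder s g (upd c j d) (S j) y) Q HQ M) as [j [_ Hj]].
  { intros t Ht. destruct (Had t Ht) as [y [[e [j [Hj [[Ve Ge] [Dj Ej]]]]] Hy]].
    exists y. split; [|exact Hy]. exists j. split; [exact Hj|].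
    exists (e j). split; [apply Ve|split; [exact Dj|]].
    rewrite <- Ge. apply prefix_cylinder_branch; assumption. }
  destruct (pigeonhole_adherence (fun d y => d <> c j /\
      prefix_cylinder s g (upd c j d) (S j) y) Q HQ s) as [d [_ Hd]].
  { intros t Ht. destruct (Hj t Ht) as [y [[d [Hd Sy]] Qy]].
    exists y. split; [exists d; split; assumption|exact Qy]. }
  assert (Hdc : d <> c j) by (destruct (Hd 1 ltac:(lra)) as [y [[H _] _]]; exact H).
  destruct (prefix_cylinder_closed s g two_codes cyl_interval x0 (upd c j d) (S j))
    as [e [Ve [Ae Ge]]].
  { intros t Ht. destruct (Hd t Ht) as [y [[_ Sy] Qy]]. exists y. split; assumption. }
  assert (e = c) as -> by (apply Uc; split; assumption).
  apply Hdc. rewrite Ae, upd_eq by lia. reflexivity.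
Qed.

Lemma not_tends_to_infinity (m : nat -> nat) : ~ tends_to_infinity m ->
  exists M, forall N, exists k, (N <= k)%nat /\ (m k < M)%nat.
Proof.
  intros Hm. apply not_all_ex_not in Hm. destruct Hm as [M HM]. exists M.
  intros N. apply NNPP. intros H. apply HM. exists N. intros k Hk.
  apply Nat.nlt_ge. intros Hmk. apply H. exists k. split; assumption.
Qed.

Theorem lemma1 (s : nat) (hs : (2 <= s)%nat) (g : (nat -> nat) -> R)
  (Hg : is_encoding s g) (Hc : continuous_encoding s g) (Hz : zero_redundancy s g)
  (x0 : R) (c : nat -> nat) (Hx0 : 0 <= x0 <= 1) (Hu : unary_with_code s g x0 c)
  (x : nat -> R) (alpha : nat -> nat -> nat) (m : nat -> nat)
  (Hx : forall k, 0 <= x k <= 1 /\ x k <> x0)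
  (Halpha : forall k, is_code s g (x k) (alpha k))
  (Hm : forall k, first_diff (alpha k) c (m k)) :
  Un_cv x x0 <-> tends_to_infinity m.
Proof.
  pose proof (continuous_encoding_prefix_interval s g Hc) as cyl_interval.
  pose proof (zero_redundancy_two_codes s g Hg Hz) as two_codes.
  split.
  - intros Hcv. apply NNPP. intros Hnt.
    destruct (not_tends_to_infinity m Hnt) as [M HM].
    apply (unary_not_adherent_branches s g two_codes cyl_interval x0 c M Hu).
    intros t Ht. destruct (Hcv t Ht) as [N HN]. destruct (HM N) as [k [Hk Hmk]].
    exists (x k). split; [exists (alpha k), (m k); auto|apply HN, Hk].
  - intros Hinf eps Heps. destruct Hu as [[Vc Gc] _].
    destruct (prefix_cylinder_shrinks s g two_codes cyl_interval c Vc eps Heps) as [N HN].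
    destruct (Hinf N) as [K HK]. exists K. intros k Hk. unfold R_dist. rewrite <- Gc.
    apply HN, (prefix_cylinder_antimono s g c N (m k)); [apply HK, Hk|].
    destruct (Halpha k) as [Va Ga]. exists (alpha k). split; [exact Va|split; [|exact Ga]].
    apply (proj2 (Hm k)).
Qed.
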